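(* Let $G$ be a non-amenable group, $H$ a subgroup of $G$, and $T$ a right transversal of $H$ in $G$ with $1\in T$; let $\pi_H\colon G\to H$ and $\pi_T\colon G\to T$ be the unique maps with $g=\pi_H(g)\pi_T(g)$ for all $g\in G$. Suppose $G$ has a $k$-paradoxical decomposition with translating sets $S_1,\ldots,S_k$ where $1\in S_1$, and let $S=\bigcup_{i=1}^k S_i$. Let $F$ be a finite nonempty subset of $T$, put $\Phi_i=\pi_T(FS_i^{-1})$, $\Phi=\pi_T(FS^{-1})=\bigcup_{i=1}^k\Phi_i$, and $S_i'=\Phi_iS_iF^{-1}\cap H$. Then: (i) If $|\Phi|=|F|$, then $H$ has a $k$-paradoxical decomposition with translating sets $S_1',\ldots,S_k'$; consequently $\mathcal{T}(H)\leq\sum_{i=1}^k|S_i'|$. (ii) If $|\Phi|\leq\frac{k}{2}|F|$, then $H$ has a $2$-paradoxical decomposition with total translating set $\bigcup_{i=1}^kS_i'$; consequently $\mathcal{T}(H)\leq 2\sum_{i=1}^k|S_i'|$.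
   Context: A right transversal of $H$ in $G$ is a subset containing exactly one element of each right coset $Hg$. For $k\geq 2$, a group $G$ admits a $k$-paradoxical decomposition with translating sets $S_1=\{g_{1,1},\ldots,g_{1,n_1}\},\ldots,S_k=\{g_{k,1},\ldots,g_{k,n_k}\}$ (finite subsets of $G$) if there are pairwise disjoint subsets $P_{i,j}$ ($1\le i\le k$, $1\le j\le n_i$) of $G$ with $G=\bigcup_{j=1}^{n_i}P_{i,j}g_{i,j}$ for each $i$; the set $\bigcup_i S_i$ is the total translating set. A $2$-paradoxical decomposition is a paradoxical decomposition, and the Tarski number $\mathcal{T}(G)$ of a non-amenable group is the minimum of $|S_1|+|S_2|$ over all $2$-paradoxical decompositions (equivalently, the minimal number of pieces $m+n$ in $G=\bigcup_{i=1}^mP_ig_i=\bigcup_{j=1}^nQ_jh_j$ with disjoint pieces). *)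

From HB Require Import structures.
From mathcomp Require Import all_boot.
From mathcomp Require Import monoid.
From mathcomp Require Import finmap.
From Stdlib Require Import Reals.

Set Implicit Arguments.
Unset Strict Implicit.
Unset Printing Implicit Defensive.

Local Open Scope group_scope.
Local Open Scope fset_scope.

Section Defs.
Variable G : groupType.

Definition fmulg (A B : {fset G}) : {fset G} := [fset a * b | a in A, b in B].
Definition finvg (A : {fset G}) : {fset G} := [fset a^-1 | a in A].

Definition is_subgroup (H : {pred G}) : Prop :=
  [/\ 1 \in H, (forall x y, x \in H -> y \in H -> x * y \in H)
     & (forall x, x \in H -> x^-1 \in H)].

(* T is a right transversal of H in G: T contains exactly one element
   of each right coset H g  (t \in H g  <->  g * t^-1 \in H). *)
Definition right_transversal (H T : {pred G}) : Prop :=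
  forall g, exists! t, t \in T /\ g * t^-1 \in H.

Definition kparadoxical (H : {pred G}) (k : nat) (S : 'I_k -> {fset G}) : Prop :=
  (forall i s, s \in S i -> s \in H) /\
  exists P : 'I_k -> G -> G -> Prop,
    (forall i s x, s \in S i -> P i s x -> x \in H) /\
    (forall i j s t x, s \in S i -> t \in S j -> P i s x -> P j t x ->
        i = j /\ s = t) /\
    (forall i g, g \in H -> exists2 s, s \in S i & exists2 x, P i s x & g = x * s).

(* "T(H) <= n" for the Tarski number T(H) = min of |S_1|+|S_2| over all
   (2-)paradoxical decompositions of H: some paradoxical decomposition of H
   has |S_1| + |S_2| <= n. *)
Definition tarski_number_le (H : {pred G}) (n : nat) : Prop :=
  exists S : 'I_2 -> {fset G}, kparadoxical H S /\ (\sum_(i < 2) #|` S i| <= n)%N.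

Definition amenable : Prop :=
  exists mu : (G -> Prop) -> R,
    (mu (fun _ => True) = 1)%R /\
    (forall A, (0 <= mu A)%R) /\
    (forall A B, (forall x, ~ (A x /\ B x)) ->
        mu (fun x => A x \/ B x) = (mu A + mu B)%R) /\
    (forall g A, mu (fun x => A (g^-1 * x)) = mu A).

End Defs.

(* Hall's marriage theorem for bipartite graphs with finite neighbourhoods
   (by Zorn's lemma: a maximal set of removable edges leaves a perfect matching,
   since two edges at the same vertex cannot both be indispensable) turns the
   existence of a paradoxical decomposition of H with translating sets S'_i
   into a counting condition: every finite B in H x {1..k} has at least |B|
   neighbours in the union of the h S'_i^-1 over (h, i) in B.
   This count comes from the decomposition of G.  Translating B by F gives
   |B||F| pairs (hf, i), which the decomposition of G sends injectively to
   elements x with hf in x S_i; then piT x lies in Phi_i and piH x is a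
   neighbour of (h, i), so |B||F| <= |N(B)||Phi|.  If |Phi| = |F| this is
   Hall's condition for S'.  If 2|Phi| <= k|F|, the bound for A x {1..k} gives
   |A U^-1| >= 2|A| for U the union of the S'_i, which is Hall's condition for
   a 2-paradoxical decomposition with both translating sets U. *)

From HB Require Import structures.
From mathcomp Require Import all_boot.
From mathcomp Require Import monoid.
From mathcomp Require Import finmap.
From Stdlib Require Import Reals.
From mathcomp Require Import boolp classical_sets.
From mathcomp Require Import zify.

Set Implicit Arguments.
Unset Strict Implicit.
Unset Printing Implicit Defensive.

Local Open Scope fset_scope.

Section CardImfset2.
Variables (A B C : choiceType) (f : A -> B -> C) (X : {fset A}) (Y : {fset B}).

Lemma card_imfset2_le : (#|` [fset f x y | x in X, y in Y]| <= #|` X| * #|` Y|)%N.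
Proof.
rewrite unlock /= size_seq_fset.
by apply: leq_trans (size_undup _) _; rewrite size_allpairs.
Qed.

Lemma card_in_imfset2 :
  {in X & Y, forall x y, {in X & Y, forall x' y', f x y = f x' y' -> x = x' /\ y = y'}} ->
  #|` [fset f x y | x in X, y in Y]| = (#|` X| * #|` Y|)%N.
Proof.
move=> f_inj; rewrite unlock /= size_seq_fset undup_id ?size_allpairs //.
apply: allpairs_uniq => //; try exact: fset_uniq.
move=> [x y] [x' y'] /allpairsP [[a b] /= [aX bY [-> ->]]].
move=> /allpairsP [[a' b'] /= [aX' bY' [-> ->]]] /= E.
by have [-> ->] := f_inj _ _ aX bY _ _ aX' bY' E.
Qed.

End CardImfset2.

Lemma card_bigfcup_le (I : eqType) (T : choiceType) (r : seq I) (F : I -> {fset T}) :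
  (#|` \bigcup_(i <- r) F i| <= \sum_(i <- r) #|` F i|)%N.
Proof.
elim: r => [|a r IHr]; first by rewrite !big_nil cardfs0.
by rewrite !big_cons (leq_trans (leq_card_fsetU _ _).1) ?leq_add2l.
Qed.

Section HallMarriage.
Variables (L R : choiceType) (D : {pred L}).
Implicit Types (N : L -> {fset R}) (B : {fset L}).

Definition hall_condition N :=
  forall B, {subset B <= D} -> (#|` B| <= #|` \bigcup_(b <- B) N b|)%N.

Definition fremove N b y x := if x == b then N b `\ y else N x.

Lemma hall_conditionN N : ~ hall_condition N ->
  exists2 B : {fset L}, {subset B <= D} & (#|` \bigcup_(b <- B) N b| < #|` B|)%N.
Proof.
move=> /existsNP [B /not_implyP [DB /negP]]; rewrite -ltnNge => lt.
by exists B.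
Qed.

Lemma bigfcup_fremove_notin N b y B : b \notin B ->
  \bigcup_(x <- B) fremove N b y x = \bigcup_(x <- B) N x.
Proof.
by move=> bB; apply: eq_big_seq => x xB; rewrite /fremove; case: eqP xB bB => // -> ->.
Qed.

Lemma mem_bigfcup_fremove N b y B x z : x \in B -> z \in N x -> (x != b) || (z != y) ->
  z \in \bigcup_(x <- B) fremove N b y x.
Proof.
move=> xB zN xbzy; apply/bigfcupP; exists x; rewrite ?xB //.
by rewrite /fremove; case: (eqVneq x b) xbzy zN => [-> /= zy zN|]; rewrite ?inE ?zy.
Qed.

Lemma hall_condition_fremove N b y1 y2 : hall_condition N -> b \in D -> y1 != y2 ->
  hall_condition (fremove N b y1) \/ hall_condition (fremove N b y2).
Proof.
(* Otherwise take violating sets B1, B2 for the two removals; both contain b,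
   and Hall's condition for b |` (C1 `|` C2) and C1 `&` C2, with Ci := Bi `\ b,
   adds up to #|C1| + #|C2| + 1 <= #|V1| + #|V2| < #|B1| + #|B2|. *)
move=> hallN Db y12; apply: contrapT => /not_orP [/hall_conditionN [B1 DB1 lt1]].
move=> /hall_conditionN [B2 DB2 lt2].
have mem_b B y : {subset B <= D} ->
    (#|` \bigcup_(x <- B) fremove N b y x| < #|` B|)%N -> b \in B.
  move=> DB; apply: contraTT => bB; rewrite -leqNgt bigfcup_fremove_notin //.
  exact: hallN.
have bB1 := mem_b _ _ DB1 lt1; have bB2 := mem_b _ _ DB2 lt2.
set V1 := \bigcup_(x <- B1) _ in lt1; set V2 := \bigcup_(x <- B2) _ in lt2.
set C1 := B1 `\ b; set C2 := B2 `\ b.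
have sub_union : \bigcup_(x <- b |` (C1 `|` C2)) N x `<=` V1 `|` V2.
  apply/bigfcupsP => x xC _; apply/fsubsetP => z zN; rewrite inE.
  move: xC; rewrite !inE => /orP [/eqP xb|/orP [] /andP [xb xB]].
    subst x; case: (eqVneq z y1) => [zy1|zy1]; apply/orP; [right|left].
      by apply: (mem_bigfcup_fremove bB2 zN); rewrite zy1 y12 orbT.
    by apply: (mem_bigfcup_fremove bB1 zN); rewrite zy1 orbT.
  by apply/orP; left; apply: (mem_bigfcup_fremove xB zN); rewrite xb.
  by apply/orP; right; apply: (mem_bigfcup_fremove xB zN); rewrite xb.
have sub_inter : \bigcup_(x <- C1 `&` C2) N x `<=` V1 `&` V2.
  apply/bigfcupsP => x; rewrite !inE => /andP [/andP [xb xB1] /andP [_ xB2]] _.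
  by apply/fsubsetP => z zN; rewrite inE !(mem_bigfcup_fremove _ zN) ?xb.
have DU : {subset b |` (C1 `|` C2) <= D}.
  by move=> x; rewrite !inE => /orP [/eqP ->|/orP [] /andP [_ xB]] //; [apply: DB1|apply: DB2].
have DI : {subset C1 `&` C2 <= D}.
  by move=> x; rewrite !inE => /andP [/andP [_ /DB1 ?] _].
have cardU := leq_trans (hallN _ DU) (fsubset_leq_card sub_union).
have cardI := leq_trans (hallN _ DI) (fsubset_leq_card sub_inter).
have := cardfsUI V1 V2; have := cardfsUI C1 C2.
have := cardfsD1 b B1; have := cardfsD1 b B2.
rewrite cardfsU1 !inE eqxx /= in cardU; rewrite bB1 bB2 -/C1 -/C2.
lia.
Qed.

Lemma chain_finite_cover (T : eqType) (F : set (set T)) (s : seq T) :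
  total_on F subset -> {in s, forall x, (\bigcup_(X in F) X)%classic x} ->
  exists2 X, X = set0 \/ F X & {in s, forall x, X x}.
Proof.
move=> totF; elim: s => [|x s IHs] sF; first by exists set0; [left|].
have [X FX Xs] := IHs (fun y ys => sF y (mem_behead (ys : y \in behead (x :: s)))).
have [Y FY Yx] := sF x (mem_head x s).
have XYtot : (X `<=` Y \/ Y `<=` X)%classic.
  by case: FX => [->|FX]; [left; apply: sub0set|exact: totF].
case: XYtot => [XY|YX].
  by exists Y; [right|move=> z; rewrite inE => /orP [/eqP ->|/Xs/XY]].
by exists X => // z; rewrite inE => /orP [/eqP ->|/Xs]; [apply: YX|].
Qed.

Variable N : L -> {fset R}.

Definition prune (Z : set (L * R)) b := [fset y in N b | (b, y) \notin Z].

Lemma prune_set0 : prune set0 = N.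
Proof. by apply: funext => b; apply/fsetP => y; rewrite !inE in_set0 andbT. Qed.

Lemma prune_setU1 Z b y :
  prune (Z `|` [set (b, y)])%classic = fremove (prune Z) b y.
Proof.
apply: funext => x; apply/fsetP => z; rewrite /fremove.
case: eqP => [->|/eqP xb]; rewrite !inE in_setU in_set1.
  by rewrite xpair_eqE eqxx negb_or; case: (z == y); rewrite ?andbF ?andbT.
by rewrite xpair_eqE (negbTE xb) orbF.
Qed.

Hypothesis hallN : hall_condition N.

Lemma hall_condition_prune_chain (F : set (set (L * R))) :
  (F `<=` [set Z | hall_condition (prune Z)])%classic ->
  total_on F subset -> hall_condition (prune (\bigcup_(X in F) X)%classic).
Proof.
move=> hallF totF B DB.
set s := [seq e <- [seq (b, y) | b <- B, y <- N b] | e \in (\bigcup_(X in F) X)%classic].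
have [X FX Xs] : exists2 X, X = set0 \/ F X & {in s, forall e, X e}.
  by apply: chain_finite_cover => // e; rewrite mem_filter => /andP [/set_mem].
have hallX : hall_condition (prune X) by case: FX => [->|/hallF]; rewrite ?prune_set0.
apply: leq_trans (hallX B DB) (fsubset_leq_card _).
apply/bigfcupsP => b bB _; apply/fsubsetP => y.
rewrite !inE => /andP [yN yX]; apply/bigfcupP; exists b; rewrite ?bB //.
rewrite !inE yN /=; apply: contra yX => yU; apply/mem_set/Xs.
by rewrite mem_filter yU; apply: allpairs_f_dep.
Qed.

Theorem hall_sdr (y0 : R) :
  exists f : L -> R, {in D, forall b, f b \in N b} /\ {in D &, injective f}.
Proof.
have [Z [hallZ Zmax]] := Zorn_bigcup hall_condition_prune_chain.
pose M := prune Z; have hallM : hall_condition M := hallZ.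
have M_fremove b y : y \in M b -> ~ hall_condition (fremove M b y).
  rewrite !inE => /andP [_ /negP yZ]; rewrite -prune_setU1; apply: Zmax.
  by split=> [|/(_ (b, y) (or_intror erefl)) /mem_set //]; exact: subsetUl.
have M_single b : b \in D -> exists y, M b = [fset y].
  move=> Db; have /fset0Pn [y yM] : M b != fset0.
    rewrite -cardfs_gt0 -(cardfs1 b) -[M b](big_seq_fset1 fsetU); apply: hallM.
    by move=> x /fset1P ->.
  exists y; apply/fsetP => z; rewrite inE; apply/idP/eqP => [zM|->//].
  apply: contraTeq isT => zy.
  by case: (hall_condition_fremove hallM Db zy) => [/(M_fremove _ _ zM)|/(M_fremove _ _ yM)].
have [f fP] : {f : L -> R & forall b, b \in D -> M b = [fset f b]}.
  apply: (boolp.choice (P := fun b y => b \in D -> M b = [fset y])) => b.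
  have [Db|_] := boolP (b \in D); last by exists y0.
  by have [y My] := M_single b Db; exists y.
exists f; split=> [b Db|b1 b2 Db1 Db2 f12].
  by have := fset11 (f b); rewrite -fP // !inE => /andP [].
apply: contrapT => /eqP b12; have := hallM [fset b1; b2].
rewrite cardfs2 b12 ltnNge => /(_ _)/negP; apply.
  by move=> x /fset2P [] ->.
apply: leq_trans (fsubset_leq_card (B := [fset f b1]) _) _; last by rewrite cardfs1.
by apply/bigfcupsP => x /fset2P [] -> _; rewrite fP // f12.
Qed.

End HallMarriage.

Local Open Scope group_scope.

Section FsetProducts.
Variable G : groupType.
Implicit Types A B : {fset G}.

Lemma fmulgP A B x :
  reflect (exists2 a, a \in A & exists2 b, b \in B & x = a * b) (x \in fmulg A B).
Proof. exact: imfset2P. Qed.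

Lemma in_fmulg A B a b : a \in A -> b \in B -> a * b \in fmulg A B.
Proof. exact: in_imfset2. Qed.

Lemma in_finvg A a : (a^-1 \in finvg A) = (a \in A).
Proof. exact/mem_imfset/invg_inj. Qed.

Lemma fmulgS A A' B B' : A `<=` A' -> B `<=` B' -> fmulg A B `<=` fmulg A' B'.
Proof.
move=> /fsubsetP sA /fsubsetP sB; apply/fsubsetP => x /fmulgP [a aA [b bB ->]].
by apply: in_fmulg; [apply: sA|apply: sB].
Qed.

Lemma card_fmulg_le A B : (#|` fmulg A B| <= #|` A| * #|` B|)%N.
Proof. exact: card_imfset2_le. Qed.

End FsetProducts.

Section ParadoxicalDecompositions.
Variables (G : groupType) (H : {pred G}).

(* A k-paradoxical decomposition of H with translating sets S amounts to an
   injection c of H * 'I_m into H with c (g, i) \in g (S i)^-1: the piece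
   containing g for the i-th cover is then the one of c (g, i). *)
Definition paradox_nbhd m (S : 'I_m -> {fset G}) (p : G * 'I_m) :=
  [fset p.1 * s^-1 | s in S p.2].

Lemma kparadoxical_injection m (S : 'I_m -> {fset G}) : kparadoxical H S ->
  exists c : G * 'I_m -> G,
    {in [pred p | p.1 \in H], forall p, c p \in paradox_nbhd S p} /\
    {in [pred p | p.1 \in H] &, injective c}.
Proof.
case=> _ [P [_ [P_disj P_cover]]].
have [c cP] : {c : G * 'I_m -> G * G & forall p, p.1 \in H ->
    [/\ (c p).1 \in S p.2, P p.2 (c p).1 (c p).2 & p.1 = (c p).2 * (c p).1]}.
  apply: (boolp.choice (P := fun p q => p.1 \in H ->
    [/\ q.1 \in S p.2, P p.2 q.1 q.2 & p.1 = q.2 * q.1])) => -[g i].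
  have [gH|_] := boolP (g \in H); last by exists (g, g).
  by have [s sS [x Px ->]] := P_cover i g gH; exists (s, x).
exists (fun p => (c p).2); split=> [p pH|p q pH qH cpq].
  have [sS _ E] := cP p pH; apply/imfsetP; exists (c p).1 => //=.
  by rewrite E mulgK.
have [sS Ps Ep] := cP p pH; have [tS Pt Eq] := cP q qH.
rewrite cpq in Ps; have [ipq spq] := P_disj _ _ _ _ _ sS tS Ps Pt.
by rewrite [p]surjective_pairing [q]surjective_pairing Ep Eq cpq spq ipq.
Qed.

Hypothesis H_subgroup : is_subgroup H.

Lemma kparadoxical_of_hall m (S : 'I_m -> {fset G}) :
  (forall i, {subset S i <= H}) ->
  hall_condition [pred p | p.1 \in H] (paradox_nbhd S) -> kparadoxical H S.
Proof.
case: H_subgroup => _ mulH invH SH hallS.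
have [f [f_nbhd f_inj]] := hall_sdr hallS 1.
split=> //; exists (fun i s x => exists2 h, h \in H & f (h, i) = x /\ x * s = h).
split; [|split].
- move=> i s x sS [h hH [_ xs]]; rewrite -(mulgK s x) xs; apply: mulH => //.
  exact/invH/(SH i).
- move=> i j s t x sS tS [h hH [fh xs]] [h' hH' [fh' xt]].
  have [hh ij] : (h, i) = (h', j) by apply: f_inj; rewrite ?inE //= fh fh'.
  by split=> //; apply: (mulgI x); rewrite xs xt.
- move=> i g gH; have /imfsetP [s /= sS fg] := f_nbhd (g, i) gH.
  by exists s => //; exists (f (g, i)); [exists g => //; split|]; rewrite fg ?mulgVK.
Qed.

Lemma kparadoxical_const m (U : {fset G}) : {subset U <= H} ->
  (forall A : {fset G}, {subset A <= H} -> (m * #|` A| <= #|` fmulg A (finvg U)|)%N) ->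
  kparadoxical H (fun _ : 'I_m => U).
Proof.
move=> UH growth; apply: kparadoxical_of_hall => // B BH.
set A := [fset p.1 | p in B].
have AH : {subset A <= H} by move=> _ /imfsetP [p /BH pH ->].
have cardB : (#|` B| <= m * #|` A|)%N.
  have sB : B `<=` [fset ((a, i) : G * 'I_m) | a in A, i in [fset i in 'I_m]].
    apply/fsubsetP => -[a i] pB; apply: in_imfset2; rewrite ?inE //.
    by apply/imfsetP; exists (a, i).
  rewrite mulnC; apply: leq_trans (fsubset_leq_card sB) _.
  by apply: leq_trans (card_imfset2_le _ _ _) _; rewrite card_finset card_ord.
have sAU : fmulg A (finvg U) `<=` \bigcup_(p <- B) paradox_nbhd (fun=> U) p.
  apply/fsubsetP => _ /fmulgP [_ /imfsetP [p pB ->] [_ /imfsetP [u uU ->] ->]].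
  by apply/bigfcupP; exists p; rewrite ?pB //; apply: in_imfset.
exact: leq_trans cardB (leq_trans (growth A AH) (fsubset_leq_card sAU)).
Qed.

Lemma tarski_number_leW m n : (m <= n)%N -> tarski_number_le H m -> tarski_number_le H n.
Proof. by move=> mn [S [pS Sm]]; exists S; split; last exact: leq_trans Sm mn. Qed.

Lemma kparadoxical_tarski_number_le k (S : 'I_k.+2 -> {fset G}) :
  kparadoxical H S -> tarski_number_le H (\sum_(i < k.+2) #|` S i|).
Proof.
case=> SH [P [PH [P_disj P_cover]]].
pose w := widen_ord (isT : (2 <= k.+2)%N).
exists (fun j => S (w j)); split.
  split=> [i|]; first exact: SH.
  exists (fun j => P (w j)); split=> [i|]; first exact: PH.
  split=> [i j s t x sS tS Ps Pt|i]; last exact: P_cover.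
  have [wij ->] := P_disj _ _ _ _ _ sS tS Ps Pt.
  by split=> //; apply: val_inj; exact: (congr1 val wij).
rewrite big_ord_recl big_ord1 (big_ord_recl k.+1) (big_ord_recl k).
have -> : w ord0 = ord0 by apply: val_inj.
have -> : w (lift ord0 ord0) = lift ord0 ord0 by apply: val_inj.
by rewrite addnA leq_addr.
Qed.

End ParadoxicalDecompositions.

Section SubgroupTransfer.
Variables (G : groupType) (H T : {pred G}) (piH piT : G -> G).
Hypotheses (H_subgroup : is_subgroup H) (T_transversal : right_transversal H T)
  (pi_decomp : forall g, [/\ piH g \in H, piT g \in T & g = piH g * piT g]).

Lemma transversal_eq g t1 t2 : t1 \in T -> t2 \in T ->
  g * t1^-1 \in H -> g * t2^-1 \in H -> t1 = t2.
Proof.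
move=> t1T t2T gt1 gt2; have [t [_ t_uniq]] := T_transversal g.
by rewrite -(t_uniq t1 (conj t1T gt1)) -(t_uniq t2 (conj t2T gt2)).
Qed.

Lemma mulg_piTV g : g * (piT g)^-1 = piH g.
Proof. by case: (pi_decomp g) => _ _ {1}->; rewrite mulgK. Qed.

Lemma piT_mulH h g : h \in H -> piT (h * g) = piT g.
Proof.
case: H_subgroup (pi_decomp (h * g)) (pi_decomp g) => _ mulH _ [hgH hgT _] [gH gT _] hH.
apply: (transversal_eq (g := h * g)) hgT gT _ _; first by rewrite mulg_piTV.
by rewrite -mulgA mulg_piTV mulH.
Qed.

Lemma piT_mulHT h t : h \in H -> t \in T -> piT (h * t) = t.
Proof.
case: H_subgroup (pi_decomp t) => H1 _ _ [tH tT _] hH tT'; rewrite piT_mulH //.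
by apply: (transversal_eq (g := t)) tT tT' _ _; rewrite ?mulg_piTV ?mulgV.
Qed.

Variables (k : nat) (S : 'I_k.+2 -> {fset G}) (F : {fset G}).
Hypotheses (S_paradoxical : kparadoxical [pred x | true] S) (F_T : {subset F <= T}).

Definition Phi_ i := [fset piT x | x in fmulg F (finvg (S i))].
Definition Phi := [fset piT x | x in fmulg F (finvg (\bigcup_(i <- enum 'I_k.+2) S i))].
Definition S' i := [fset x in fmulg (fmulg (Phi_ i) (S i)) (finvg F) | x \in H].

Lemma Phi_sub i : Phi_ i `<=` Phi.
Proof.
apply/fsubsetP => _ /imfsetP [_ /fmulgP [f fF [_ /imfsetP [s sS ->] ->]] ->].
apply: in_imfset; apply: in_fmulg; rewrite // in_finvg.
by apply/bigfcupP; exists i; rewrite ?mem_enum.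
Qed.

Lemma mul_nbhd_Phi i h f s : h \in H -> f \in F -> s \in S i ->
  h * f * s^-1 \in fmulg (paradox_nbhd S' (h, i)) (Phi_ i).
Proof.
case: H_subgroup => _ mulH invH hH fF sS; set x := h * f * s^-1.
have [xH _ x_decomp] := pi_decomp x.
have xPhi : piT x \in Phi_ i.
  by rewrite /x -mulgA piT_mulH //; apply: in_imfset; apply: in_fmulg; rewrite ?in_finvg.
rewrite {1}x_decomp; apply: in_fmulg => //.
apply/imfsetP; exists ((piH x)^-1 * h); last by rewrite /= invgM invgK mulVKg.
rewrite /S' /= !inE (mulH _ _ (invH _ xH) hH) andbT.
have -> : (piH x)^-1 * h = piT x * s * f^-1.
  by apply: (mulgI (piH x)); rewrite mulVKg !mulgA -x_decomp /x mulgVK mulgK.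
by apply: in_fmulg; [apply: in_fmulg|rewrite in_finvg].
Qed.

Lemma card_nbhd_S' (B : {fset G * 'I_k.+2}) : {subset B <= [pred p | p.1 \in H]} ->
  (#|` B| * #|` F| <= #|` \bigcup_(p <- B) paradox_nbhd S' p| * #|` Phi|)%N.
Proof.
move=> BH; have [c [c_nbhd c_inj]] := kparadoxical_injection S_paradoxical.
set B' := [fset ((p.1 * f, p.2) : G * 'I_k.+2) | p in B, f in F].
have cardB' : #|` B'| = (#|` B| * #|` F|)%nat.
  apply: card_in_imfset2 => p f pB fF q f' qB f'F [pfq pq2].
  have ff' : f = f'.
    by rewrite -(piT_mulHT (BH _ pB) (F_T fF)) pfq (piT_mulHT (BH _ qB) (F_T f'F)).
  move: pfq; rewrite ff' => /mulIg pq1; split=> //.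
  by rewrite [p]surjective_pairing [q]surjective_pairing pq1 pq2.
have cB' : c @` B' `<=` fmulg (\bigcup_(p <- B) paradox_nbhd S' p) Phi.
  apply/fsubsetP => _ /imfsetP [_ /imfset2P [[h i] pB [f fF ->]] ->].
  have /imfsetP [s /= sS ->] := c_nbhd (h * f, i) isT.
  apply: (fsubsetP _ _ (mul_nbhd_Phi (BH _ pB) fF sS)).
  by apply: fmulgS (Phi_sub i); apply: bigfcup_sup.
have cardcB' : #|` c @` B'| = #|` B'| by rewrite card_in_imfset //= => p q _ _; apply: c_inj.
rewrite -cardB' -cardcB'.
exact: leq_trans (fsubset_leq_card cB') (card_fmulg_le _ _).
Qed.

Lemma Phi_gt0 : 1 \in S ord0 -> F != fset0 -> (0 < #|` Phi|)%N.
Proof.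
move=> S1 /fset0Pn [f fF]; rewrite cardfs_gt0; apply/fset0Pn.
exists (piT (f * 1^-1)); apply: (fsubsetP (Phi_sub ord0)).
by apply: in_imfset; apply: in_fmulg; rewrite ?in_finvg.
Qed.

Lemma kparadoxical_S' : #|` Phi| = #|` F| -> F != fset0 -> kparadoxical H S'.
Proof.
move=> PhiF F0; apply: (kparadoxical_of_hall H_subgroup) => [i s|B BH].
  by rewrite inE => /andP [].
by have := card_nbhd_S' BH; rewrite PhiF leq_pmul2r ?cardfs_gt0.
Qed.

Lemma kparadoxical2_bigcup_S' : (2 * #|` Phi| <= k.+2 * #|` F|)%N -> (0 < #|` Phi|)%N ->
  kparadoxical H (fun _ : 'I_2 => \bigcup_(i <- enum 'I_k.+2) S' i).
Proof.
move=> PhiF Phi0; set U := \bigcup_(i <- _) _.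
apply: (kparadoxical_const H_subgroup) => [s /bigfcupP [i _]|A AH].
  by rewrite inE => /andP [].
set B := [fset ((a, i) : G * 'I_k.+2) | a in A, i in [fset i in 'I_k.+2]].
have BH : {subset B <= [pred p | p.1 \in H]} by move=> _ /imfset2P [a aA [i _ ->]]; exact: AH.
have cardB : #|` B| = (#|` A| * k.+2)%nat.
  by rewrite card_in_imfset2 ?card_finset ?card_ord // => a i _ _ a' i' _ _ [-> ->].
have sB : \bigcup_(p <- B) paradox_nbhd S' p `<=` fmulg A (finvg U).
  apply/bigfcupsP => _ /imfset2P [a aA [i _ ->]] _; apply/fsubsetP => _ /imfsetP [s sS ->].
  by apply: in_fmulg; rewrite // in_finvg; apply/bigfcupP; exists i; rewrite ?mem_enum.
have growth := leq_trans (card_nbhd_S' BH) (leq_mul (fsubset_leq_card sB) (leqnn #|` Phi|)).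
rewrite -(leq_pmul2r Phi0); apply: leq_trans growth; rewrite cardB.
nia.
Qed.

End SubgroupTransfer.

Theorem proposition3p1 (G : groupType) (H T : {pred G}) (piH piT : G -> G)
    (k : nat) (S : 'I_k.+2 -> {fset G}) (F : {fset G}) :
  ~ amenable G ->
  is_subgroup H ->
  right_transversal H T ->
  1 \in T ->
  (forall g, [/\ piH g \in H, piT g \in T & g = piH g * piT g]) ->
  kparadoxical [pred x | true] S ->
  1 \in S ord0 ->
  F != fset0 ->
  {subset F <= T} ->
  let Phi_ i := [fset piT x | x in fmulg F (finvg (S i))] in
  let Phi := [fset piT x | x in fmulg F (finvg (\bigcup_(i <- enum 'I_k.+2) S i))] in
  let S' i := [fset x in fmulg (fmulg (Phi_ i) (S i)) (finvg F) | x \in H] in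
  (#|` Phi| = #|` F| ->
     kparadoxical H S' /\ tarski_number_le H (\sum_(i < k.+2) #|` S' i|)) /\
  (2 * #|` Phi| <= k.+2 * #|` F| ->
     (exists S2 : 'I_2 -> {fset G},
        kparadoxical H S2 /\ S2 ord0 `|` S2 ord_max = \bigcup_(i <- enum 'I_k.+2) S' i) /\
     tarski_number_le H (2 * \sum_(i < k.+2) #|` S' i|))%N.
Proof.
move=> _ H_subgroup T_transversal _ pi_decomp S_paradoxical S1 F0 F_T Phi_ Phi S'.
split=> [PhiF|PhiF].
  have S'_par : kparadoxical H S' by apply: kparadoxical_S'.
  by split=> //; apply: kparadoxical_tarski_number_le.
have Phi0 : (0 < #|` Phi|)%N by apply: Phi_gt0.
set U := \bigcup_(i <- _) S' i.
have U_par : kparadoxical H (fun _ : 'I_2 => U).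
  by apply: kparadoxical2_bigcup_S'.
split; first by exists (fun=> U); split=> //; apply: fsetUid.
apply: tarski_number_leW (kparadoxical_tarski_number_le U_par).
rewrite big_ord_recl big_ord1 addnn -mul2n leq_mul2l /=.
by apply: leq_trans (card_bigfcup_le _ _) _; rewrite big_enum.
Qed.
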